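(* Let $\kappa$ be a maximal clique of the IDNC graph $\mathcal G$. Then $\alpha_i\ge\beta_i$ for every receiver $i\in\mathcal M$, where \[ \alpha_i=\sum_{k\ne i} q_i\xi_k-\sum_{k\in\mathcal T_\rho(\kappa),k\ne i}\Phi_{ik}(q_i)+\sum_{k\in\mathcal T_\sigma(\kappa),k\ne i}\Lambda_{ik}(q_i),\qquad \beta_i=-\sum_{k\in\mathcal T_\rho(\kappa),k\ne i}\Phi_{ik}(0)+\sum_{k\in\mathcal T_\sigma(\kappa),k\ne i}\Lambda_{ik}(0), \] \[ \Phi_{ik}(x)=\frac{q_k}{N}\Big(1+\frac{(\varrho_k-\psi_k+1)(\varrho_i+x)}{N-1}\Big),\quad \Lambda_{ik}(x)=\frac{q_k\psi_k(\varrho_i+x)}{N(N-1)},\quad \xi_k=\frac{\psi_k\varrho_k}{N(N-1)}, \] with the sum over $k\ne i$ ranging over $k\in\{1,\dots,M\}$.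
   Context: A sender holds a frame $\mathcal N$ of $N\ge2$ packets and serves receivers $\mathcal M=\{1,\dots,M\}$. For each receiver $i$ there are sets $\mathcal H_i\subseteq\mathcal N$ (Has set), $\mathcal L_i=\mathcal N\setminus\mathcal H_i$ (Lacks set) and $\mathcal W_i\subseteq\mathcal L_i$ (Wants set), with cardinalities $\varrho_i=|\mathcal H_i|$, $\psi_i=|\mathcal W_i|$. Receiver $i$ has packet success probability $q_i\in[0,1]$. The IDNC graph $\mathcal G$ has a primary vertex $v_{ij}$ for each $i\in\mathcal M$, $j\in\mathcal W_i$, and a secondary vertex $v_{ij}$ for each $i\in\mathcal M$, $j\in\mathcal L_i\setminus\mathcal W_i$; two distinct vertices $v_{ij},v_{kl}$ are adjacent iff (C1) $j=l$, or (C2) $j\in\mathcal H_k$ and $l\in\mathcal H_i$. For a maximal clique $\kappa$ of $\mathcal G$, $\mathcal T_\rho(\kappa)$ (resp. $\mathcal T_\sigma(\kappa)$) denotes the set of receivers having a primary (resp. secondary) vertex in $\kappa$. *)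

From mathcomp Require Import all_boot all_order all_algebra.
Set Implicit Arguments. Unset Strict Implicit. Unset Printing Implicit Defensive.
Import Order.TTheory GRing.Theory Num.Theory.

Section IDNC.
Variables (N M : nat).
(* Has sets H i and Wants sets W i of receivers i : 'I_M over packets 'I_N. *)
Variables (H W : 'I_M -> {set 'I_N}).

Definition Lacks (i : 'I_M) : {set 'I_N} := ~: H i.

Definition vertex := ('I_M * 'I_N)%type.

Definition idnc_vertices : {set vertex} := [set v | v.2 \in Lacks v.1].
Definition primary (v : vertex) : bool := (v.2 \in Lacks v.1) && (v.2 \in W v.1).
Definition secondary (v : vertex) : bool := (v.2 \in Lacks v.1) && (v.2 \notin W v.1).

Definition idnc_adj (v w : vertex) : bool :=
  (v != w) && ((v.2 == w.2) || ((v.2 \in H w.1) && (w.2 \in H v.1))).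

Definition is_clique (K : {set vertex}) : bool :=
  (K \subset idnc_vertices) &&
  [forall v in K, forall w in K, (v != w) ==> idnc_adj v w].

Definition is_maximal_clique (K : {set vertex}) : bool :=
  is_clique K && [forall K' : {set vertex}, (K \proper K') ==> ~~ is_clique K'].

Definition T_rho (K : {set vertex}) : {set 'I_M} :=
  [set i | [exists j : 'I_N, ((i, j) \in K) && primary (i, j)]].
Definition T_sigma (K : {set vertex}) : {set 'I_M} :=
  [set i | [exists j : 'I_N, ((i, j) \in K) && secondary (i, j)]].

Variable R : realFieldType.
Variable q : 'I_M -> R.
Local Open Scope ring_scope.

Definition rho (i : 'I_M) : R := (#|H i|)%:R.
Definition psi (i : 'I_M) : R := (#|W i|)%:R.
Definition NR : R := N%:R.
Definition N1R : R := (N.-1)%:R.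

Definition Phi (i k : 'I_M) (x : R) : R :=
  q k / NR * (1 + (rho k - psi k + 1) * (rho i + x) / N1R).
Definition Lambda (i k : 'I_M) (x : R) : R :=
  q k * psi k * (rho i + x) / (NR * N1R).
Definition xi (k : 'I_M) : R := psi k * rho k / (NR * N1R).

Definition alpha (K : {set vertex}) (i : 'I_M) : R :=
  \sum_(k < M | k != i) q i * xi k
  - \sum_(k in T_rho K | k != i) Phi i k (q i)
  + \sum_(k in T_sigma K | k != i) Lambda i k (q i).

Definition beta (K : {set vertex}) (i : 'I_M) : R :=
  - \sum_(k in T_rho K | k != i) Phi i k 0
  + \sum_(k in T_sigma K | k != i) Lambda i k 0.
End IDNC.

From mathcomp Require Import all_boot all_order all_algebra.
From mathcomp Require Import ring lra.
Import Order.TTheory GRing.Theory Num.Theory.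
Local Open Scope ring_scope.

(* Both [Phi i k] and [Lambda i k] are affine in their argument, so
   [alpha K i - beta K i] is [q i] times the sum of the [xi k], minus the
   slopes of the [Phi i k] over [T_rho], plus the slopes of the [Lambda i k]
   over [T_sigma]. The latter slopes are nonnegative, and a receiver [k] with a
   primary vertex wants a packet, so [psi k >= 1] and the slope of [Phi i k]
   is at most [xi k] because [(psi k - 1) (rho k + 1) >= 0]. *)

Lemma ler_sum_subpred (R : numDomainType) (I : finType) (P P' : pred I)
    (F : I -> R) :
  (forall k, P k -> P' k) -> (forall k, P' k -> 0 <= F k) ->
  \sum_(k | P k) F k <= \sum_(k | P' k) F k.
Proof.
move=> PP' F0; rewrite [X in _ <= X]big_mkcond [X in X <= _]big_mkcond /=.
apply: ler_sum => k _; case Pk: (P k); first by rewrite PP'.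
by case P'k: (P' k); rewrite ?F0.
Qed.

Lemma unit_weight_affine_le_mul (R : realDomainType) (t p r : R) :
  0 <= t <= 1 -> 1 <= p -> 0 <= r -> t * (r - p + 1) <= p * r.
Proof.
case/andP=> t0 t1 p1 r0.
have shift_le : r - p + 1 <= p * r by nra.
have [s0 | /ltW s0] := lerP 0 (r - p + 1).
- by apply: le_trans shift_le; rewrite ler_piMl.
- by apply: le_trans (mulr_ge0_le0 t0 s0) _; rewrite mulr_ge0 // (le_trans ler01).
Qed.

Section IDNCGap.
Variables (R : realFieldType) (N M : nat) (H W : 'I_M -> {set 'I_N}).
Variable q : 'I_M -> R.

Let D : R := NR N R * N1R N R.

Definition Phi_slope (k : 'I_M) : R := q k * (rho H R k - psi W R k + 1) / D.
Definition Lambda_slope (k : 'I_M) : R := q k * psi W R k / D.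

Lemma Phi_affine (i k : 'I_M) (x : R) :
  Phi H W q i k x = Phi H W q i k 0 + x * Phi_slope k.
Proof. by rewrite /Phi /Phi_slope /D invfM; ring. Qed.

Lemma Lambda_affine (i k : 'I_M) (x : R) :
  Lambda H W q i k x = Lambda H W q i k 0 + x * Lambda_slope k.
Proof. by rewrite /Lambda /Lambda_slope; ring. Qed.

Lemma alpha_sub_beta (K : {set vertex N M}) (i : 'I_M) :
  alpha H W q K i - beta H W q K i =
  q i * (\sum_(k < M | k != i) xi H W R k
         - \sum_(k in T_rho H W K | k != i) Phi_slope k
         + \sum_(k in T_sigma H W K | k != i) Lambda_slope k).
Proof.
rewrite /alpha /beta.
rewrite (eq_bigr _ (fun k _ => Phi_affine i k (q i))).
rewrite (eq_bigr _ (fun k _ => Lambda_affine i k (q i))).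
rewrite !big_split /= -!mulr_sumr; ring.
Qed.

Lemma D_ge0 : 0 <= D.
Proof. by rewrite mulr_ge0 ?ler0n. Qed.

Lemma xi_ge0 (k : 'I_M) : 0 <= xi H W R k.
Proof. by rewrite /xi divr_ge0 ?mulr_ge0 ?ler0n ?D_ge0. Qed.

Hypothesis q01 : forall k, 0 <= q k <= 1.

Lemma Lambda_slope_ge0 (k : 'I_M) : 0 <= Lambda_slope k.
Proof. by case/andP: (q01 k) => qk0 _; rewrite divr_ge0 ?mulr_ge0 ?ler0n ?D_ge0. Qed.

Lemma psi_ge1_T_rho (K : {set vertex N M}) (k : 'I_M) :
  k \in T_rho H W K -> 1 <= psi W R k.
Proof.
rewrite inE => /existsP [j /andP [_ /andP [_ jW]]].
by rewrite /psi ler1n card_gt0; apply/set0Pn; exists j.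
Qed.

Lemma Phi_shift_le_xi (k : 'I_M) : 1 <= psi W R k -> Phi_slope k <= xi H W R k.
Proof.
move=> psi1; rewrite /Phi_slope /xi ler_wpM2r ?invr_ge0 ?D_ge0 //.
by rewrite unit_weight_affine_le_mul ?ler0n.
Qed.

Lemma sum_Phi_shift_le_sum_xi (K : {set vertex N M}) (i : 'I_M) :
  \sum_(k in T_rho H W K | k != i) Phi_slope k <= \sum_(k < M | k != i) xi H W R k.
Proof.
apply: (@le_trans _ _ (\sum_(k in T_rho H W K | k != i) xi H W R k)).
  by apply: ler_sum => k /andP [/psi_ge1_T_rho /Phi_shift_le_xi].
by apply: ler_sum_subpred => [k /andP[] | k _] //; apply: xi_ge0.
Qed.

End IDNCGap.

Theorem theorem3 (R : realFieldType) (N M : nat) (H W : 'I_M -> {set 'I_N})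
  (q : 'I_M -> R) (K : {set ('I_M * 'I_N)%type}) :
  (2 <= N)%N ->
  (forall i, W i \subset Lacks H i) ->
  (forall i, 0 <= q i <= 1) ->
  is_maximal_clique H K ->
  forall i : 'I_M, beta H W q K i <= alpha H W q K i.
Proof.
move=> _ _ q01 _ i; rewrite -subr_ge0 alpha_sub_beta.
have [qi0 _] := andP (q01 i).
rewrite mulr_ge0 // addr_ge0 //; first by rewrite subr_ge0 sum_Phi_shift_le_sum_xi.
by apply: sumr_ge0 => k _; apply: Lambda_slope_ge0.
Qed.
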